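(* Let $D$ be a distance on $\mathcal D(\mathcal H)$ that is convex in each argument and contractive. Let $\rho$ be a state and let $\sigma^*$ be a separable state with $D(\rho,\sigma^* )=E_D(\rho)$. Then for every $p\in[0,1]$, $$E_D\big((1-p)\rho+p\sigma^*\big)=(1-p)E_D(\rho).$$
   Context: $\mathcal H$ is a finite-dimensional multipartite Hilbert space, $\mathcal D(\mathcal H)$ its density matrices, $\mathcal S\subseteq\mathcal D(\mathcal H)$ the separable states (convex combinations of product states). A distance $D$ is a metric on density matrices; convex in each argument means $D(p\rho_1+(1-p)\rho_2,\sigma)\le pD(\rho_1,\sigma)+(1-p)D(\rho_2,\sigma)$; contractive means $D(\Lambda[\rho],\Lambda[\sigma])\le D(\rho,\sigma)$ for every CPT map $\Lambda$. The distance-based entanglement measure is $E_D(\rho)=\inf_{\sigma\in\mathcal S}D(\rho,\sigma)$. *)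

From HB Require Import structures.
From mathcomp Require Import all_boot all_order all_algebra.
Set Implicit Arguments. Unset Strict Implicit. Unset Printing Implicit Defensive.
Import Order.TTheory GRing.Theory Num.Theory.
Local Open Scope ring_scope.

Section QDefs.
Variable C : numClosedFieldType.

Definition adjmx (m n : nat) (A : 'M[C]_(m, n)) : 'M[C]_(n, m) :=
  (map_mx Num.conj A)^T.

Definition psd (n : nat) (A : 'M[C]_n) : Prop :=
  adjmx A = A /\ forall v : 'cV[C]_n, 0 <= (adjmx v *m A *m v) 0 0.

Definition density (n : nat) (A : 'M[C]_n) : Prop := psd A /\ \tr A = 1.

(* Matrices on C^#|T| are viewed as indexed by the finite type T
   (the basis of C^#|T| is identified with T via enum_val). *)
Definition mxT (T : finType) (f : T -> T -> C) : 'M[C]_#|T| :=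
  \matrix_(a, b) f (enum_val a) (enum_val b).
Definition entT (T : finType) (A : 'M[C]_#|T|) (x y : T) : C :=
  A (enum_rank x) (enum_rank y).

(* Multipartite Hilbert space with m parties of local dimensions d k:
   H = (x)_k C^(d k), with basis indexed by the tuples (i_k)_k. *)
Definition mpidx (m : nat) (d : 'I_m -> nat) : finType :=
  {dffun forall k : 'I_m, 'I_(d k)}.
Definition mpdim (m : nat) (d : 'I_m -> nat) : nat := #|mpidx d|.

Definition tensor_prod (m : nat) (d : 'I_m -> nat)
    (rho : forall k : 'I_m, 'M[C]_(d k)) : 'M[C]_(mpdim d) :=
  mxT (fun (x y : mpidx d) => \prod_(k < m) rho k (x k) (y k)).

Definition product_state (m : nat) (d : 'I_m -> nat) (s : 'M[C]_(mpdim d)) : Prop :=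
  exists rho : forall k : 'I_m, 'M[C]_(d k),
    (forall k, density (rho k)) /\ s = tensor_prod rho.

Definition separable (m : nat) (d : 'I_m -> nat) (s : 'M[C]_(mpdim d)) : Prop :=
  exists (r : nat) (w : 'I_r -> C) (ps : 'I_r -> 'M[C]_(mpdim d)),
    (forall i, 0 <= w i) /\ \sum_(i < r) w i = 1 /\
    (forall i, product_state (ps i)) /\
    s = \sum_(i < r) w i *: ps i.

(* ampliation id_k (x) L of a map L on n x n matrices, acting on
   matrices over C^k (x) C^n (basis indexed by 'I_k * 'I_n) *)
Definition ampliate (k n : nat) (L : 'M[C]_n -> 'M[C]_n)
    (X : 'M[C]_#|{: 'I_k * 'I_n}|) : 'M[C]_#|{: 'I_k * 'I_n}| :=
  mxT (fun (x y : 'I_k * 'I_n) =>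
    L (\matrix_(i, j) entT X (x.1, i) (y.1, j)) x.2 y.2).

Definition linear_map (n : nat) (L : 'M[C]_n -> 'M[C]_n) : Prop :=
  forall (a : C) (X Y : 'M[C]_n), L (a *: X + Y) = a *: L X + L Y.
Definition completely_positive (n : nat) (L : 'M[C]_n -> 'M[C]_n) : Prop :=
  forall (k : nat) (X : 'M[C]_#|{: 'I_k * 'I_n}|), psd X -> psd (ampliate L X).
Definition trace_preserving (n : nat) (L : 'M[C]_n -> 'M[C]_n) : Prop :=
  forall X : 'M[C]_n, \tr (L X) = \tr X.
Definition CPT (n : nat) (L : 'M[C]_n -> 'M[C]_n) : Prop :=
  linear_map L /\ completely_positive L /\ trace_preserving L.

Definition distance (n : nat) (D : 'M[C]_n -> 'M[C]_n -> C) : Prop :=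
  (forall r s, density r -> density s -> 0 <= D r s) /\
  (forall r s, density r -> density s -> (D r s = 0 <-> r = s)) /\
  (forall r s, density r -> density s -> D r s = D s r) /\
  (forall r s t, density r -> density s -> density t ->
      D r t <= D r s + D s t).

Definition convex_each_arg (n : nat) (D : 'M[C]_n -> 'M[C]_n -> C) : Prop :=
  (forall (p : C) r1 r2 s, 0 <= p <= 1 -> density r1 -> density r2 -> density s ->
     D (p *: r1 + (1 - p) *: r2) s <= p * D r1 s + (1 - p) * D r2 s) /\
  (forall (p : C) r s1 s2, 0 <= p <= 1 -> density r -> density s1 -> density s2 ->
     D r (p *: s1 + (1 - p) *: s2) <= p * D r s1 + (1 - p) * D r s2).

Definition contractive (n : nat) (D : 'M[C]_n -> 'M[C]_n -> C) : Prop :=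
  forall (L : 'M[C]_n -> 'M[C]_n) r s, CPT L -> density r -> density s ->
    D (L r) (L s) <= D r s.

Definition is_inf (P : C -> Prop) (e : C) : Prop :=
  (forall x, P x -> e <= x) /\ (forall l, (forall x, P x -> l <= x) -> l <= e).

(* E_D(rho) = e, where E_D(rho) = inf_{sigma separable} D(rho, sigma) *)
Definition ED_eq (m : nat) (d : 'I_m -> nat)
    (D : 'M[C]_(mpdim d) -> 'M[C]_(mpdim d) -> C) (rho : 'M[C]_(mpdim d)) (e : C) : Prop :=
  is_inf (fun x => exists sigma, separable sigma /\ x = D rho sigma) e.

End QDefs.

From HB Require Import structures.
From mathcomp Require Import all_boot all_order all_algebra.
Set Implicit Arguments. Unset Strict Implicit. Unset Printing Implicit Defensive.
Import Order.TTheory GRing.Theory Num.Theory.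
Local Open Scope ring_scope.

(* Let sigma be a separable state closest to rho and tau = (1-p) rho + p sigma.
   Convexity of D in each argument, together with D r r = 0, gives
     D(tau, sigma) <= (1-p) D(rho, sigma)   and   D(rho, tau) <= p D(rho, sigma).
   The first inequality shows that the infimum E_D(tau) is at most
   (1-p) D(rho, sigma); for the converse, any separable s satisfies
     D(rho, sigma) <= D(rho, s) <= D(rho, tau) + D(tau, s)
                                <= p D(rho, sigma) + D(tau, s).
   This argument works for any set of "free" states consisting of density
   matrices (section ClosestFreeState).
   To instantiate it with separable states we must know that separable
   states are density matrices: a tensor product of positive semidefinite
   matrices is a Gram-type sum (via the spectral decompositions of the
   factors), hence positive semidefinite, and its trace is the product of
   the traces; density matrices are closed under convex combinations. *)

Section Spectral.
Variable C : numClosedFieldType.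

Lemma adjmxE m n (A : 'M[C]_(m, n)) i j : adjmx A i j = (A j i)^*.
Proof. by rewrite !mxE. Qed.

Lemma adjmxM m n p (A : 'M[C]_(m, n)) (B : 'M[C]_(n, p)) :
  adjmx (A *m B) = adjmx B *m adjmx A.
Proof. by rewrite /adjmx map_mxM trmx_mul. Qed.

Lemma adjmxK m n (A : 'M[C]_(m, n)) : adjmx (adjmx A) = A.
Proof. by apply/matrixP => i j; rewrite !mxE conjCK. Qed.

(* A positive semidefinite matrix is Hermitian, hence normal, so it is
   unitarily diagonalised by its spectral basis: A = P^* diag(s) P. *)
Lemma psd_spectralE n (A : 'M[C]_n) : psd A ->
  A = adjmx (spectralmx A) *m diag_mx (spectral_diag A) *m spectralmx A.
Proof.
move=> [Aher _].
have Anormal : A \is normalmx.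
  rewrite qualifE /=.
  by have -> : (A ^t*)%sesqui = A by rewrite -map_trmx; exact: Aher.
have /orthomx_spectralP AE := Anormal.
rewrite invmx_unitary ?spectral_unitarymx // in AE.
by rewrite /adjmx map_trmx.
Qed.

Lemma spectralmx_unit n (A : 'M[C]_n) :
  spectralmx A *m adjmx (spectralmx A) = 1%:M.
Proof. by rewrite /adjmx map_trmx; apply/unitarymxP; exact: spectral_unitarymx. Qed.

(* The eigenvalues of a psd matrix are nonnegative: test the quadratic
   form on the l-th eigenvector P^* e_l. *)
Lemma psd_spectral_ge0 n (A : 'M[C]_n) l : psd A -> 0 <= spectral_diag A 0 l.
Proof.
move=> Apsd; have [_ Apos] := Apsd.
set P := spectralmx A; set s := spectral_diag A.
pose e : 'cV[C]_n := delta_mx l 0.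
have adj_e : adjmx e = delta_mx 0 l.
  by apply/matrixP => i j; rewrite !mxE conjC_nat andbC.
have diag_e : (delta_mx 0 l : 'rV[C]_n) *m diag_mx s = s 0 l *: delta_mx 0 l.
  apply/matrixP => i j; rewrite mul_mx_diag !mxE.
  by case: eqP => [_|]; case: eqP => [->|] /=; rewrite ?mulr1 ?mul1r ?mul0r ?mulr0.
have := Apos (adjmx P *m e).
rewrite adjmxM adjmxK {1}(psd_spectralE Apsd) -/P -/s !mulmxA.
rewrite -[adjmx e *m P *m adjmx P]mulmxA spectralmx_unit mulmx1.
rewrite -![adjmx e *m diag_mx s *m P *m _]mulmxA spectralmx_unit mulmx1.
by rewrite adj_e diag_e -scalemxAl mul_delta_mx !mxE !eqxx mulr1.
Qed.

Lemma psd_spectral_entry n (A : 'M[C]_n) i j : psd A ->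
  A i j = \sum_l spectral_diag A 0 l *
            ((spectralmx A l i)^* * spectralmx A l j).
Proof.
move=> Apsd; rewrite {1}(psd_spectralE Apsd) mxE; apply: eq_bigr => l _.
by rewrite mul_mx_diag !mxE mulrA [_ * spectral_diag _ _ _]mulrC.
Qed.
End Spectral.

Section States.
Variable C : numClosedFieldType.

Lemma gram_form (L : finType) n (c : L -> C) (F : L -> 'I_n -> C)
    (M : 'M[C]_n) (v : 'cV[C]_n) :
  (forall a b, M a b = \sum_l c l * ((F l a)^* * F l b)) ->
  (adjmx v *m M *m v) 0 0 =
    \sum_l c l * ((\sum_b F l b * v b 0)^* * (\sum_b F l b * v b 0)).
Proof.
move=> HM; rewrite mxE.
under eq_bigr do rewrite mxE big_distrl /=.
under eq_bigr do under eq_bigr do rewrite HM big_distrr big_distrl /=.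
under [RHS]eq_bigr do rewrite rmorph_sum big_distrl big_distrr /=.
under [RHS]eq_bigr do under eq_bigr do rewrite big_distrr big_distrr /=.
rewrite exchange_big /= [RHS]exchange_big /=.
apply: eq_bigr => a _; rewrite exchange_big /=; apply: eq_bigr => l _.
apply: eq_bigr => b _; rewrite adjmxE rmorphM /=.
set x := (v a 0)^*; set y := c l; set z := (F l a)^*.
rewrite !mulrA; congr (_ * _ * _).
by rewrite [x * y]mulrC -[y * x * z]mulrA [x * z]mulrC mulrA.
Qed.

Lemma gram_psd (L : finType) n (c : L -> C) (F : L -> 'I_n -> C) (M : 'M[C]_n) :
  (forall l, 0 <= c l) ->
  (forall a b, M a b = \sum_l c l * ((F l a)^* * F l b)) -> psd M.
Proof.
move=> c_ge0 HM; split.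
  apply/matrixP => a b; rewrite adjmxE !HM rmorph_sum; apply: eq_bigr => l _.
  rewrite !rmorphM /= conjCK (geC0_conj (c_ge0 l)).
  by rewrite [X in c l * X]mulrC.
move=> v; rewrite (gram_form _ HM); apply: sumr_ge0 => l _.
by apply: mulr_ge0 => //; rewrite mulrC mul_conjC_ge0.
Qed.

Lemma prod_sum_mpidx (m : nat) (d : 'I_m -> nat)
    (F : forall k : 'I_m, 'I_(d k) -> C) :
  \prod_(k < m) \sum_(i : 'I_(d k)) F k i =
    \sum_(x : mpidx d) \prod_(k < m) F k (x k).
Proof.
pose T_ := fun k : 'I_m => (ordinal (d k) : finType).
pose P_ := fun k : 'I_m => [ffun i : T_ k => F k i].
transitivity (\prod_(k < m) \sum_(j in tagged_with T_ k) untag 0 (P_ k) j).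
  apply: eq_bigr => k _.
  rewrite -(big_tag (op := GRing.add) (T_ := T_) (fun k => P_ k) k).
  by apply: eq_bigr => i _; rewrite ffunE.
rewrite bigA_distr_big_dep -(@big_fprod C 0 1 *%R +%R _ T_ P_).
rewrite (reindex (@fprod_of_dffun _ T_)); last first.
  by apply: onW_bij; exact: fprod_of_dffun_bij.
by apply: eq_bigr => x _; apply: eq_bigr => k _; rewrite /P_ ffunE fprodE.
Qed.

(* A tensor product of psd matrices is psd: expanding each factor
   spectrally writes it as a Gram-type sum indexed by the global basis. *)
Lemma tensor_prod_psd (m : nat) (d : 'I_m -> nat)
    (rho : forall k : 'I_m, 'M[C]_(d k)) :
  (forall k, psd (rho k)) -> psd (tensor_prod rho).
Proof.
move=> rho_psd.
pose c (t : mpidx d) := \prod_(k < m) spectral_diag (rho k) 0 (t k).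
pose F (t : mpidx d) (a : 'I_(mpdim d)) :=
  \prod_(k < m) spectralmx (rho k) (t k) (enum_val a k).
apply: (@gram_psd _ _ c F).
  by move=> t; apply: prodr_ge0 => k _; exact: psd_spectral_ge0.
move=> a b; rewrite /tensor_prod /mxT mxE.
under eq_bigr do rewrite (psd_spectral_entry _ _ (rho_psd _)).
rewrite prod_sum_mpidx; apply: eq_bigr => t _.
by rewrite /c /F rmorph_prod -!big_split.
Qed.

Lemma tensor_prod_trace (m : nat) (d : 'I_m -> nat)
    (rho : forall k : 'I_m, 'M[C]_(d k)) :
  \tr (tensor_prod rho) = \prod_(k < m) \tr (rho k).
Proof.
rewrite /tensor_prod /mxT /mxtrace.
under eq_bigr do rewrite mxE.
rewrite prod_sum_mpidx (reindex (fun a : 'I_(mpdim d) => enum_val a)) //.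
by apply: onW_bij; exact: enum_val_bij.
Qed.

Lemma tensor_prod_density (m : nat) (d : 'I_m -> nat)
    (rho : forall k : 'I_m, 'M[C]_(d k)) :
  (forall k, density (rho k)) -> density (tensor_prod rho).
Proof.
move=> rho_dens; split.
  by apply: tensor_prod_psd => k; case: (rho_dens k).
by rewrite tensor_prod_trace big1 // => k _; case: (rho_dens k).
Qed.

Lemma psd0 n : psd (0 : 'M[C]_n).
Proof.
split; first by apply/matrixP => i j; rewrite !mxE conjC0.
by move=> v; rewrite mulmx0 mul0mx mxE.
Qed.

Lemma psdD n (A B : 'M[C]_n) : psd A -> psd B -> psd (A + B).
Proof.
move=> [A_her A_pos] [B_her B_pos]; split.
  by apply/matrixP => i j; rewrite !mxE rmorphD /= -!adjmxE A_her B_her.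
by move=> v; rewrite mulmxDr mulmxDl mxE addr_ge0.
Qed.

Lemma psdZ n (a : C) (A : 'M[C]_n) : 0 <= a -> psd A -> psd (a *: A).
Proof.
move=> a_ge0 [A_her A_pos]; split.
  by apply/matrixP => i j; rewrite !mxE rmorphM /= (geC0_conj a_ge0) -adjmxE A_her.
by move=> v; rewrite -scalemxAr -scalemxAl mxE mulr_ge0.
Qed.

Lemma density_convex_comb n (r : nat) (w : 'I_r -> C) (A : 'I_r -> 'M[C]_n) :
  (forall i, 0 <= w i) -> \sum_(i < r) w i = 1 -> (forall i, density (A i)) ->
  density (\sum_(i < r) w i *: A i).
Proof.
move=> w_ge0 w_sum1 A_dens; split.
  apply: (big_ind (@psd C n)); [exact: psd0 | exact: psdD |].
  by move=> i _; apply: psdZ => //; case: (A_dens i).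
rewrite raddf_sum /= -w_sum1; apply: eq_bigr => i _.
by rewrite mxtraceZ; case: (A_dens i) => _ ->; rewrite mulr1.
Qed.

Lemma separable_density (m : nat) (d : 'I_m -> nat) (s : 'M[C]_(mpdim d)) :
  separable s -> density s.
Proof.
move=> [r [w [ps [w_ge0 [w_sum1 [ps_prod ->]]]]]].
apply: density_convex_comb => // i.
by have [rho [rho_dens ->]] := ps_prod i; exact: tensor_prod_density.
Qed.

Lemma density_mix n (p : C) (A B : 'M[C]_n) : 0 <= p <= 1 ->
  density A -> density B -> density ((1 - p) *: A + p *: B).
Proof.
move=> /andP[p_ge0 p_le1] [A_psd A_tr] [B_psd B_tr]; split.
  by apply: psdD; apply: psdZ => //; rewrite subr_ge0.
by rewrite mxtraceD !mxtraceZ A_tr B_tr !mulr1 subrK.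
Qed.
End States.

Section ClosestFreeState.
Variables (C : numClosedFieldType) (n : nat) (D : 'M[C]_n -> 'M[C]_n -> C).
Variable free : 'M[C]_n -> Prop.
Hypothesis D_metric : distance D.
Hypothesis D_convex : convex_each_arg D.
Hypothesis free_density : forall s, free s -> density s.

Definition dist_to_free (rho : 'M[C]_n) (x : C) : Prop :=
  exists sigma, free sigma /\ x = D rho sigma.

Variables (rho sigma : 'M[C]_n) (p : C).
Hypotheses (rho_dens : density rho) (sigma_free : free sigma) (p01 : 0 <= p <= 1).

Let tau := (1 - p) *: rho + p *: sigma.
Let sigma_dens : density sigma := free_density sigma_free.

Lemma D_self r : density r -> D r r = 0.
Proof. by case: D_metric => _ [D_zero _] r_dens; apply/D_zero. Qed.

Lemma complement01 : 0 <= 1 - p <= 1.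
Proof. by case/andP: p01 => p_ge0 p_le1; rewrite subr_ge0 p_le1 lerBlDl lerDr. Qed.

Lemma oneminusK : 1 - (1 - p) = p.
Proof. by rewrite opprB addrC subrK. Qed.

Lemma mix_dist_to_sigma : D tau sigma <= (1 - p) * D rho sigma.
Proof.
have := D_convex.1 _ _ _ _ complement01 rho_dens sigma_dens sigma_dens.
by rewrite oneminusK (D_self sigma_dens) mulr0 addr0.
Qed.

Lemma rho_dist_to_mix : D rho tau <= p * D rho sigma.
Proof.
have := D_convex.2 _ _ _ _ complement01 rho_dens rho_dens sigma_dens.
by rewrite oneminusK (D_self rho_dens) mulr0 add0r.
Qed.

Lemma closest_free_mix :
  is_inf (dist_to_free rho) (D rho sigma) ->
  is_inf (dist_to_free tau) ((1 - p) * D rho sigma).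
Proof.
move=> [sigma_closest _]; split; last first.
  by move=> l l_lb; apply: le_trans (l_lb _ _) mix_dist_to_sigma; exists sigma.
move=> _ [s [s_free ->]].
have rho_s : D rho sigma <= D rho s by apply: sigma_closest; exists s.
have [_ [_ [_ D_tri]]] := D_metric.
have tau_dens : density tau by exact: density_mix.
have tri := D_tri _ _ _ rho_dens tau_dens (free_density s_free).
rewrite mulrBl mul1r lerBlDl.
by apply: le_trans rho_s (le_trans tri _); apply: lerD rho_dist_to_mix _.
Qed.
End ClosestFreeState.

Theorem mainTheorem8 (C : numClosedFieldType) (m : nat) (d : 'I_m -> nat)
    (D : 'M[C]_(mpdim d) -> 'M[C]_(mpdim d) -> C)
    (rho sigma_star : 'M[C]_(mpdim d)) (p : C) :
  distance D -> convex_each_arg D -> contractive D ->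
  density rho -> separable sigma_star ->
  ED_eq D rho (D rho sigma_star) ->
  0 <= p <= 1 ->
  ED_eq D ((1 - p) *: rho + p *: sigma_star) ((1 - p) * D rho sigma_star).
Proof.
move=> D_metric D_convex _ rho_dens sigma_sep sigma_closest p01.
exact: (closest_free_mix D_metric D_convex (@separable_density C m d)).
Qed.
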